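(* Let $F$ be a finite abelian group with cardinality $|F|\ge3$. Then $\lambda(F)\le\frac1{|F|}\log(|F|-1)$.
   Context: For a compact abelian group $G$ with normalized Haar measure $\mu$ (for finite $G$, the uniform probability measure) and (multiplicative) dual group of characters $\widehat{G}$, let $\mathbb{Z}[\widehat{G}]$ denote the ring of integral linear combinations of characters, regarded as functions on $G$. For $f\in\mathbb{Z}[\widehat{G}]$, the logarithmic Mahler measure over $G$ is $\mathsf{m}_G(f)=\int_G\log|f|\,d\mu$ (with $\log 0=-\infty$). The Lehmer constant of $G$ is $\lambda(G)=\inf\{\mathsf{m}_G(f): f\in\mathbb{Z}[\widehat{G}],\ \mathsf{m}_G(f)>0\}$. *)

From HB Require Import structures.
From mathcomp Require Import all_boot all_order all_algebra all_fingroup.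
From mathcomp Require Import all_classical all_reals.
From mathcomp Require Import ereal exp.
From mathcomp Require Import complex.

Set Implicit Arguments.
Unset Strict Implicit.
Unset Printing Implicit Defensive.

Import Order.TTheory GRing.Theory Num.Theory.
Local Open Scope ring_scope.

Section Lehmer.
Variables (R : realType) (gT : finGroupType).

Definition is_character (chi : gT -> R[i]) : Prop :=
  (forall x y : gT, chi (x * y)%g = chi x * chi y) /\ (forall x : gT, chi x != 0).

(* Z[\hat G]: integral linear combinations of characters, as functions on gT. *)
Definition in_ZGhat (f : gT -> R[i]) : Prop :=
  exists s : seq (int * (gT -> R[i])),
    (forall p, p \in s -> is_character p.2) /\
    (forall x : gT, f x = \sum_(p <- s) (p.1)%:~R * p.2 x).

Definition lnE (r : R) : \bar R := if r == 0 then -oo%E else (ln r)%:E.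

(* logarithmic Mahler measure w.r.t. the uniform probability on gT *)
Definition mahler (f : gT -> R[i]) : \bar R :=
  ((#|gT|%:R)^-1%:E * \sum_(x : gT) lnE (Normc.normc (f x)))%E.

Definition lehmer_const : \bar R :=
  ereal_inf [set m : \bar R | exists f, in_ZGhat f /\ mahler f = m /\ (0 < m)%E].

End Lehmer.

(** For a finite abelian group [F] of order [n], the sum of all [n]
  characters is [n] times the indicator of the identity, so
  [f := sum_chi chi - 1] takes the value [n - 1] at [1] and has modulus [1]
  everywhere else; hence [m_F(f) = log (n - 1) / n], which is positive as
  soon as [n >= 3].
  The characters come from the character theory of [F] over [algC]; their
  values are [n]-th roots of unity, which are moved into [R[i]] by sending
  [z ^+ k] to [w ^+ k] for primitive [n]-th roots [z] and [w]. *)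

From HB Require Import structures.
From mathcomp Require Import all_boot all_order all_algebra all_fingroup.
From mathcomp Require Import all_solvable all_field all_character.
From mathcomp Require Import all_classical all_reals.
From mathcomp Require Import ereal exp.
From mathcomp Require Import complex.

Set Implicit Arguments.
Unset Strict Implicit.
Unset Printing Implicit Defensive.

Import Order.TTheory GRing.Theory Num.Theory.
Local Open Scope ring_scope.

Lemma closed_field_prim_root_exists (F : closedFieldType) n :
  (n > 0)%N -> n%:R != 0 :> F -> {z : F | n.-primitive_root z}.
Proof.
move=> n_gt0 n_neq0; apply: sigW.
have [r Dp] := closed_field_poly_normal ('X^n - 1 : {poly F}).
rewrite (monicP (monicXnsubC 1 n_gt0)) scale1r in Dp.
have r_unity : all n.-unity_root r.
  by apply/allP => z; rewrite -root_prod_XsubC -Dp.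
have size_r : (n < (size r).+1)%N.
  by rewrite -(size_prod_XsubC r id) -Dp size_XnsubC.
have uniq_r : uniq r.
  by rewrite -separable_prod_XsubC -Dp separable_Xn_sub_1.
by have /hasP[z _] := has_prim_root n_gt0 r_unity uniq_r size_r; exists z.
Qed.

Lemma sumr_eq0_of_scaled_perm (F : idomainType) (I : finType) (c : I -> F)
    (a : F) (sigma : I -> I) :
  injective sigma -> (forall j, c (sigma j) = a * c j) -> a != 1 ->
  \sum_j c j = 0.
Proof.
move=> sigma_inj c_sigma a_neq1.
have : a * \sum_j c j = \sum_j c j.
  rewrite mulr_sumr [RHS](reindex_inj sigma_inj).
  by apply: eq_bigr => j _; rewrite c_sigma.
move/eqP; rewrite -subr_eq0 -{2}[\sum_j _]mul1r -mulrBl mulf_eq0 subr_eq0.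
by rewrite (negPf a_neq1) => /eqP.
Qed.

Section RootTransfer.
Variables (F1 : fieldType) (F2 : idomainType) (n : nat) (z : F1) (w : F2).

Definition root_transfer (u : F1) : F2 :=
  if [pick k : 'I_n | z ^+ k == u] is Some k then w ^+ k else 0.

Hypotheses (z_prim : n.-primitive_root z) (w_prim : n.-primitive_root w).

Lemma root_transferX k : root_transfer (z ^+ k) = w ^+ k.
Proof.
rewrite /root_transfer; case: pickP => [k' | no_k].
  by rewrite (eq_prim_root_expr z_prim) -(eq_prim_root_expr w_prim) => /eqP.
have k_mod : (k %% n < n)%N by rewrite ltn_mod (prim_order_gt0 z_prim).
by have := no_k (Ordinal k_mod); rewrite /= (prim_expr_mod z_prim) eqxx.
Qed.

Lemma root_transferM u v : u ^+ n = 1 -> v ^+ n = 1 ->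
  root_transfer (u * v) = root_transfer u * root_transfer v.
Proof.
move=> /(prim_rootP z_prim)[i ->] /(prim_rootP z_prim)[j ->].
by rewrite -exprD !root_transferX exprD.
Qed.

Lemma root_transfer_eq1 u : u ^+ n = 1 -> (root_transfer u == 1) = (u == 1).
Proof.
move=> /(prim_rootP z_prim)[i ->]; rewrite root_transferX.
by rewrite -(expr0 w) -(expr0 z) (eq_prim_root_expr w_prim) (eq_prim_root_expr z_prim).
Qed.

Lemma root_transfer_neq0 u : u ^+ n = 1 -> root_transfer u != 0.
Proof.
move=> /(prim_rootP z_prim)[i ->]; rewrite root_transferX expf_neq0 //.
apply/eqP => w0; have := prim_expr_order w_prim.
by rewrite w0 expr0n gtn_eqF ?(prim_order_gt0 w_prim) // => /eqP; rewrite eq_sym oner_eq0.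
Qed.

End RootTransfer.

Lemma irr_separates (gT : finGroupType) (G : {group gT}) (x : gT) :
  x != 1%g -> exists i, 'chi[G]_i x != 'chi_i 1%g.
Proof.
move=> nt_x; have : x \notin \bigcap_i cfker 'chi[G]_i by rewrite TI_cfker_irr inE.
apply: contraNP => no_i; apply/bigcapP => i _; rewrite cfkerEirr inE.
by apply/negPn/negP => chi_x_neq; apply: no_i; exists i.
Qed.

Section IntegralCombinations.
Variables (R : realType) (gT : finGroupType).
Implicit Types f g chi : gT -> R[i].

Lemma in_ZGhat_ext f g : f =1 g -> in_ZGhat f -> in_ZGhat g.
Proof. by move=> fg [s [s_char fE]]; exists s; split=> // x; rewrite -fg. Qed.

Lemma in_ZGhat0 : in_ZGhat (fun _ : gT => 0 : R[i]).
Proof. by exists [::]; split=> // x; rewrite big_nil. Qed.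

Lemma in_ZGhatD f g :
  in_ZGhat f -> in_ZGhat g -> in_ZGhat (fun x => f x + g x).
Proof.
move=> [s [s_char fE]] [t [t_char gE]]; exists (s ++ t); split=> [p|x].
  by rewrite mem_cat => /orP[/s_char | /t_char].
by rewrite big_cat fE gE.
Qed.

Lemma in_ZGhatN f : in_ZGhat f -> in_ZGhat (fun x => - f x).
Proof.
move=> [s [s_char fE]]; exists [seq (- p.1, p.2) | p <- s]; split=> [q|x].
  by case/mapP=> p /s_char p_char ->.
by rewrite fE big_map -sumrN; apply: eq_bigr => p _; rewrite intrN mulNr.
Qed.

Lemma in_ZGhat_char chi : is_character chi -> in_ZGhat chi.
Proof.
move=> chi_char; exists [:: (1%:Z, chi)]; split=> [p|x].
  by rewrite inE => /eqP ->.
by rewrite big_seq1 mul1r.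
Qed.

Lemma in_ZGhat_sum (I : Type) (r : seq I) (F : I -> gT -> R[i]) :
  (forall i, in_ZGhat (F i)) -> in_ZGhat (fun x => \sum_(i <- r) F i x).
Proof.
move=> F_in; elim: r => [|i r IHr].
  by apply: in_ZGhat_ext in_ZGhat0 => x; rewrite big_nil.
by apply: in_ZGhat_ext (in_ZGhatD (F_in i) IHr) => x; rewrite big_cons.
Qed.

Lemma is_character1 : is_character (fun _ : gT => 1 : R[i]).
Proof. by split=> [x y | x]; rewrite ?mulr1 ?oner_neq0. Qed.

Lemma mahler_unimodular_off1 f :
    (forall x, x != 1%g -> Normc.normc (f x) = 1) ->
  mahler f = ((#|gT|%:R)^-1%:E * lnE (Normc.normc (f 1%g)))%E.
Proof.
move=> f_norm1; rewrite /mahler (bigD1 1%g) //= big1 ?adde0 // => x /f_norm1 ->.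
by rewrite /lnE oner_eq0 ln1.
Qed.

End IntegralCombinations.

Section AbelianDual.
Variables (R : realType) (gT : finGroupType).
Hypothesis abG : abelian [set: gT].
Local Notation G := [set: gT]%G.
Local Notation n := #|gT|.

Let n_gt0 : (0 < n)%N. Proof. by rewrite -cardsT cardG_gt0. Qed.
Let natn_neq0 : n%:R != 0 :> R[i]. Proof. by rewrite pnatr_eq0 -lt0n. Qed.

Let zC : algC := projT1 (C_prim_root_exists n_gt0).
Let zC_prim : n.-primitive_root zC := projT2 (C_prim_root_exists n_gt0).
Let wR : R[i] := projT1 (closed_field_prim_root_exists n_gt0 natn_neq0).
Let wR_prim : n.-primitive_root wR :=
  projT2 (closed_field_prim_root_exists n_gt0 natn_neq0).

Definition dual_char (i : Iirr G) (x : gT) : R[i] :=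
  root_transfer n zC wR ('chi_i x).

Let lin_irr i : 'chi[G]_i \is a linear_char. Proof. exact/char_abelianP. Qed.

Lemma irr_abelian_unity i x : 'chi[G]_i x ^+ n = 1.
Proof. by rewrite -lin_charX ?inE // -cardsT expg_cardG ?inE // lin_char1. Qed.

Lemma dual_char_is_character i : is_character (dual_char i).
Proof.
split=> [x y | x]; last exact/root_transfer_neq0/irr_abelian_unity.
by rewrite /dual_char lin_charM ?inE // root_transferM ?irr_abelian_unity.
Qed.

Let mul_irr i j := cfIirr ('chi[G]_i * 'chi_j).

Let mul_irrE i j : 'chi_(mul_irr i j) = 'chi_i * 'chi_j.
Proof. exact/cfIirrE/lin_char_irr/rpredM. Qed.

Let mul_irr_inj i : injective (mul_irr i).
Proof.
move=> j1 j2 /(congr1 (fun k => 'chi[G]_k)); rewrite !mul_irrE.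
by move/(mulrI (lin_char_unitr (lin_irr i)))/irr_inj.
Qed.

Let dual_char_mul i j x :
  dual_char (mul_irr i j) x = dual_char i x * dual_char j x.
Proof. by rewrite /dual_char mul_irrE cfunE root_transferM ?irr_abelian_unity. Qed.

Lemma sum_dual_char x : \sum_i dual_char i x = n%:R *+ (x == 1%g).
Proof.
have [-> | nt_x] := eqVneq x 1%g.
  rewrite (eq_bigr (fun _ => 1)) => [|i _]; last first.
    by rewrite /dual_char lin_char1 // -(expr0 zC) root_transferX.
  by rewrite sumr_const card_Iirr_abelian // cardsT.
have [k chi_x_neq1] := irr_separates G nt_x; rewrite lin_char1 // in chi_x_neq1.
rewrite mulr0n; apply: (sumr_eq0_of_scaled_perm (@mul_irr_inj k)).
  exact: (dual_char_mul k ^~ x).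
by rewrite /dual_char root_transfer_eq1 ?irr_abelian_unity.
Qed.

End AbelianDual.

Theorem lemma4p4 (R : realType) (gT : finGroupType) :
  abelian [set: gT] -> (3 <= #|gT|)%N ->
  (lehmer_const R gT <= ((#|gT|%:R)^-1 * ln (#|gT|%:R - 1))%:E)%E.
Proof.
move=> abG n_ge3; set n := #|gT|.
pose f (x : gT) : R[i] := \sum_i dual_char R i x - 1.
have f_in : in_ZGhat f.
  apply: in_ZGhatD (in_ZGhatN (in_ZGhat_char (is_character1 R gT))).
  by apply: in_ZGhat_sum => i; apply/in_ZGhat_char/dual_char_is_character.
have f1 : f 1%g = (n - 1)%:R.
  by rewrite /f sum_dual_char // eqxx natrB // (leq_trans _ n_ge3).
have f_off1 x : x != 1%g -> Normc.normc (f x) = 1.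
  by move=> nt_x; rewrite /f sum_dual_char // (negPf nt_x) sub0r normcN Normc.normc1.
have n1_gt1 : 1 < n%:R - 1 :> R by rewrite ltrBrDr -mulr2n ltr_nat.
have n1_eq0 : (n%:R - 1 == 0 :> R) = false := gt_eqF (lt_trans ltr01 n1_gt1).
apply: ereal_inf_lbound; exists f; split=> //.
rewrite mahler_unimodular_off1 // f1 normcMn (Normc.normc1 R).
rewrite natrB ?(leq_trans _ n_ge3) //.
rewrite /lnE n1_eq0 -EFinM lte_fin; split=> //.
by rewrite mulr_gt0 ?invr_gt0 ?ln_gt0 // ltr0n (leq_trans _ n_ge3).
Qed.
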